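(* Let $d\ge 1$ and let $(D,\mathbf{m},E)\in\mathbb{R}\times\mathbb{R}^d\times\mathbb{R}$ satisfy $D>0$ and $E-\sqrt{D^2+|\mathbf{m}|^2}>0$. For $h>1$ define $T(h)=\frac{3h-8}{24}+\frac{\sqrt{(3h+8)^2-96}}{24}$, and for $\Pi\ge E$ define $h(\Pi)=\sqrt{\Pi^2-|\mathbf{m}|^2}/D$ and $S(\Pi)=\Pi^2-\Pi E-D^2 h(\Pi)T(h(\Pi))$. Let $\Pi_*$ denote the unique real root of $S$ in $(E,\infty)$. Then for any $\Pi_r\in[E,\Pi_* )$, the Newton–Raphson iterate \[ \Pi_{r+1}=\Pi_r-\frac{S(\Pi_r)}{S'(\Pi_r)} \] satisfies $\Pi_{r+1}>\Pi_r$.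
   Context: This is the Newton–Raphson iteration (started from $\Pi_0=E$) used to recover primitive variables from conservative variables $(D,\mathbf{m},E)$ (relativistic density, momentum density, energy density) for the relativistic hydrodynamics equations with the equation of state $h=\frac{2(6p^2+4p\rho+\rho^2)}{\rho(3p+2\rho)}$, for which $p=\rho T(h)$ and $\Pi=E+p$. For $\Pi\ge E$ one has $h(\Pi)>1$, and $S$ has exactly one real root in $(E,\infty)$. *)

From Stdlib Require Import Reals List.
From Coquelicot Require Import Coquelicot.
Open Scope R_scope.

(* Squared Euclidean norm |m|^2 of a vector m in R^d, represented as a list of length d. *)
Definition norm2 (m : list R) : R := fold_right (fun x acc => x ^ 2 + acc) 0 m.

Definition Tfun (h : R) : R := (3 * h - 8) / 24 + sqrt ((3 * h + 8) ^ 2 - 96) / 24.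

Definition hfun (D : R) (m : list R) (Pi : R) : R := sqrt (Pi ^ 2 - norm2 m) / D.

Definition Sfun (D : R) (m : list R) (E : R) (Pi : R) : R :=
  Pi ^ 2 - Pi * E - D ^ 2 * hfun D m Pi * Tfun (hfun D m Pi).

From Stdlib Require Import Reals List Lra Psatz.
From Coquelicot Require Import Coquelicot.
Open Scope R_scope.

(* S is strictly increasing on [E, oo): with h = h(Pi) one has D^2 h'(Pi) = Pi / h, hence
   S'(Pi) = 2 Pi - E - Pi (hT)'(h) / h, and (hT)'(h) < h for h > 1 while h(Pi) > 1 for
   Pi >= E > sqrt (D^2 + |m|^2).  So for E <= Pr < Pstar we get S(Pr) < S(Pstar) = 0 and
   S'(Pr) > 0, i.e. the Newton correction -S(Pr)/S'(Pr) is positive. *)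

Lemma norm2_ge0 (m : list R) : 0 <= norm2 m.
Proof. induction m as [|a m IH]; simpl; nra. Qed.

Lemma lt_sqr_of_sqrt_lt (a b : R) : 0 <= a -> sqrt a < b -> a < b ^ 2.
Proof.
  intros Ha Hab.
  pose proof (sqrt_sqrt a Ha). pose proof (sqrt_pos a).
  nra.
Qed.

Lemma mul_Tfun_derive_lt (h : R) : 1 < h ->
  exists2 k, is_derive (fun y => y * Tfun y) h k & k < h.
Proof.
  intros Hh.
  set (s := sqrt ((3 * h + 8) ^ 2 - 96)).
  assert (Hs2 : s * s = (3 * h + 8) ^ 2 - 96) by (apply sqrt_sqrt; nra).
  assert (Hs0 : 0 <= s) by apply sqrt_pos.
  (* s^2 - (3h + 2)^2 = 36 (h - 1) *)
  assert (Hs : 3 * h + 2 < s) by nra.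
  exists (((6 * h - 8) * s + s * s + 3 * h * (3 * h + 8)) / (24 * s)).
  - unfold Tfun. auto_derive.
    + nra.
    + replace ((3 * h + 8) * ((3 * h + 8) * 1) + - (96)) with ((3 * h + 8) ^ 2 - 96) by ring.
      fold s. field. lra.
  - apply Rmult_lt_reg_r with (24 * s); [lra|].
    field_simplify; [nra | lra].
Qed.

Lemma hfun_gt1 (D : R) (m : list R) (x : R) :
  0 < D -> D ^ 2 + norm2 m < x ^ 2 -> 1 < hfun D m x.
Proof.
  intros HD Hx. unfold hfun.
  pose proof (norm2_ge0 m).
  assert (Hu : D < sqrt (x ^ 2 - norm2 m)).
  { pose proof (sqrt_sqrt (x ^ 2 - norm2 m) ltac:(nra)).
    pose proof (sqrt_pos (x ^ 2 - norm2 m)). nra. }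
  apply Rmult_lt_reg_r with D; [lra|].
  field_simplify; lra.
Qed.

Lemma is_derive_hfun (D : R) (m : list R) (x : R) :
  0 < D -> norm2 m < x ^ 2 -> is_derive (hfun D m) x (x / (D ^ 2 * hfun D m x)).
Proof.
  intros HD Hx. unfold hfun.
  assert (Hu : 0 < sqrt (x ^ 2 - norm2 m)) by (apply sqrt_lt_R0; lra).
  auto_derive.
  - lra.
  - replace (x * (x * 1) + - norm2 m) with (x ^ 2 - norm2 m) by ring.
    field. lra.
Qed.

Section Sfun_increasing.

Variables (D : R) (m : list R) (E : R).
Hypotheses (D_gt0 : 0 < D) (E_gt0 : 0 < E) (E_sqr_gt : D ^ 2 + norm2 m < E ^ 2).

Lemma is_derive_Sfun_pos (x : R) : E <= x ->
  exists2 l, is_derive (Sfun D m E) x l & 0 < l.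
Proof.
  intros Hx.
  pose proof (norm2_ge0 m).
  assert (Hx2 : D ^ 2 + norm2 m < x ^ 2) by nra.
  set (h := hfun D m x).
  assert (Hh : 1 < h) by (apply hfun_gt1; assumption).
  destruct (mul_Tfun_derive_lt h Hh) as [k Hk Hkh].
  pose proof (is_derive_hfun D m x D_gt0 ltac:(nra)) as Hdh. fold h in Hdh.
  pose proof (is_derive_comp (fun y => y * Tfun y) (hfun D m) x _ _ Hk Hdh) as Hcomp.
  assert (Hpoly : is_derive (fun p => p ^ 2 - p * E) x (2 * x - E)) by (auto_derive; [exact I | ring]).
  exists (2 * x - E - D ^ 2 * (x / (D ^ 2 * h) * k)).
  - apply (is_derive_ext (fun p => minus (p ^ 2 - p * E) (D ^ 2 * (hfun D m p * Tfun (hfun D m p))))).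
    + intros p. unfold Sfun, minus, plus, opp. simpl. ring.
    + exact (is_derive_minus _ _ x _ _ Hpoly (is_derive_scal _ x (D ^ 2) _ Hcomp)).
  - replace (D ^ 2 * (x / (D ^ 2 * h) * k)) with (x * (k / h)) by (field; lra).
    assert (k / h < 1) by (apply Rmult_lt_reg_r with h; [lra | field_simplify; lra]).
    nra.
Qed.

Lemma Derive_Sfun_pos (x : R) : E <= x ->
  is_derive (Sfun D m E) x (Derive (Sfun D m E) x) /\ 0 < Derive (Sfun D m E) x.
Proof.
  intros Hx. destruct (is_derive_Sfun_pos x Hx) as [l Hl Hl0].
  rewrite (is_derive_unique _ _ _ Hl). split; assumption.
Qed.

Lemma Sfun_lt (x y : R) : E <= x -> x < y -> Sfun D m E x < Sfun D m E y.
Proof.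
  intros Hx Hxy.
  apply (incr_function_le (Sfun D m E) E p_infty (Derive (Sfun D m E))); simpl; try lra.
  - intros z Hz _. apply Derive_Sfun_pos; assumption.
  - intros z Hz _. apply Derive_Sfun_pos; assumption.
Qed.

End Sfun_increasing.

Theorem lemma2 (d : nat) (D : R) (m : list R) (E : R) (Pstar Pr : R) :
  (1 <= d)%nat -> length m = d ->
  0 < D -> E - sqrt (D ^ 2 + norm2 m) > 0 ->
  (* Pstar is the unique real root of S in (E, +oo) *)
  E < Pstar -> Sfun D m E Pstar = 0 ->
  (forall x, E < x -> Sfun D m E x = 0 -> x = Pstar) ->
  E <= Pr -> Pr < Pstar ->
  Pr - Sfun D m E Pr / Derive (Sfun D m E) Pr > Pr.
Proof.
  intros _ _ HD HE _ HS _ HPr HPs.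
  pose proof (norm2_ge0 m) as HM.
  assert (HE2 : D ^ 2 + norm2 m < E ^ 2) by (apply lt_sqr_of_sqrt_lt; nra).
  assert (HE0 : 0 < E) by (pose proof (sqrt_pos (D ^ 2 + norm2 m)); lra).
  assert (HSPr : Sfun D m E Pr < 0) by (rewrite <- HS; apply Sfun_lt; assumption).
  destruct (Derive_Sfun_pos D m E HD HE0 HE2 Pr HPr) as [_ HdS].
  pose proof (Rdiv_neg_pos _ _ HSPr HdS).
  lra.
Qed.
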